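(* Let $n\ge4$ and let $G$ be an almost simple primitive permutation group with socle $G_0$ equal to $\mathrm{PSp}_n(q)$, $\mathrm{PSU}_n(q)$, or $\mathrm{P\Omega}^\epsilon_n(q)$ with $(n,\epsilon)\ne(4,-)$, acting on the set $X$ of all non-degenerate $2$-dimensional subspaces of the natural module $V$, where in the orthogonal case $X$ consists of the non-degenerate $2$-spaces of type $\mathrm{O}_2^+$. Then $\mathrm{diam}(X,G)\ge 3$.
   Context: The natural module carries the non-degenerate alternating, hermitian, or quadratic form preserved by $G_0$; a subspace $W$ is non-degenerate if $W\cap W^\perp=0$. A non-degenerate $2$-space of an orthogonal space is of type $\mathrm{O}_2^+$ if it contains a non-zero singular vector, and of type $\mathrm{O}_2^-$ otherwise. An (undirected) orbital graph of $(X,G)$ has as edge set a single $G$-orbit on unordered $2$-subsets of $X$; $\mathrm{diam}(X,G)$ is the maximum diameter of such graphs. *)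

From mathcomp Require Import all_boot all_order all_algebra all_fingroup all_solvable all_field.
Set Implicit Arguments. Unset Strict Implicit. Unset Printing Implicit Defensive.
Import GRing.Theory.
Local Open Scope ring_scope.

Section Orbital.
Variable T : finType.

Definition orbital_edge (G : {set {perm T}}) (X : {set T}) (x y : T) : rel T :=
  fun u w => [&& u \in X, w \in X & [exists g in G, [set u; w] == [set g x; g y]]].

(* A graph on vertex set X with edge relation E has diameter >= d
   (diameter +oo if disconnected): some two vertices are at distance >= d. *)
Definition graph_diam_ge (X : {set T}) (E : rel T) (d : nat) : Prop :=
  exists u w, [/\ u \in X, w \in X &
    forall p : seq T, path E u p -> last u p = w -> (d <= size p)%N].

(* diam(X,G) >= d : the maximum of the diameters of the orbital graphs is >= d,
   i.e. some orbital graph has diameter >= d. *)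
Definition orbital_diam_ge (G : {set {perm T}}) (X : {set T}) (d : nat) : Prop :=
  exists x y, [/\ x \in X, y \in X, x != y &
    graph_diam_ge X (orbital_edge G X x y) d].
End Orbital.

Inductive form_kind := Symp | Unit | Orth.
Definition form_kind_eqb (a b : form_kind) : bool :=
  match a, b with Symp, Symp | Unit, Unit | Orth, Orth => true | _, _ => false end.

Section Formed.
Variables (F : finFieldType) (n : nat).
Local Notation V := 'rV[F]_n.

Definition is_subspace (W : {set V}) : bool :=
  (0 \in W) && [forall a : F, forall u in W, forall v in W, a *: u + v \in W].

Definition is_2space (W : {set V}) : bool := is_subspace W && (#|W| == #|F| ^ 2)%N.

Variables (k : form_kind) (sigma : F -> F) (B : V -> V -> F) (Q : V -> F).

Definition bilinear_l : Prop :=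
  forall a u v w, B (a *: u + v) w = a * B u w + B v w.
Definition nondeg_form : Prop := forall u, (forall v, B u v = 0) -> u = 0.

Definition formed_space : Prop :=
  match k with
  | Symp => bilinear_l /\ (forall u v, B u v = - B v u) /\
            (forall v, B v v = 0) /\ nondeg_form
  | Unit =>
            (forall a b, sigma (a + b) = sigma a + sigma b) /\
            (forall a b, sigma (a * b) = sigma a * sigma b) /\ sigma 1 = 1 /\
            (forall a, sigma (sigma a) = a) /\ (exists a, sigma a <> a) /\
            bilinear_l /\ (forall u v, B u v = sigma (B v u)) /\ nondeg_form
  | Orth =>
            (forall a v, Q (a *: v) = a ^+ 2 * Q v) /\
            (forall u v, B u v = Q (u + v) - Q u - Q v) /\
            bilinear_l /\ (forall u v, B u v = B v u) /\ nondeg_form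
  end.

Definition nondeg_sub (W : {set V}) : bool :=
  [forall u in W, [forall v in W, B u v == 0] ==> (u == 0)].

Definition has_singular (W : {set V}) : bool := [exists v in W, (v != 0) && (Q v == 0)].

Definition totally_singular (W : {set V}) : bool := [forall v in W, Q v == 0].

(* the set X of points: non-degenerate 2-spaces (of type O_2^+ in the
   orthogonal case) *)
Definition Xpts : {set {set V}} :=
  [set W | [&& is_2space W, nondeg_sub W & form_kind_eqb k Orth ==> has_singular W]].

Definition field_aut (tau : {ffun F -> F}) : bool :=
  [forall a, forall b, (tau (a + b) == tau a + tau b) && (tau (a * b) == tau a * tau b)]
  && (tau 1 == 1).

Definition additive_perm (g : {perm V}) : bool :=
  [forall u, forall v, g (u + v) == g u + g v].

Definition semisim (g : {perm V}) : bool :=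
  [exists tau : {ffun F -> F},
    [&& field_aut tau, additive_perm g,
        [forall a : F, forall u, g (a *: u) == tau a *: g u] &
        [exists lam : F, (lam != 0) &&
           (if form_kind_eqb k Orth then [forall u, Q (g u) == lam * tau (Q u)]
            else [forall u, forall v, B (g u) (g v) == lam * tau (B u v)])]]].

Definition linear_perm (g : {perm V}) : bool :=
  [forall a : F, forall u, forall v, g (a *: u + v) == a *: g u + g v].

Definition isom_perm (g : {perm V}) : bool :=
  linear_perm g &&
  (if form_kind_eqb k Orth then [forall u, Q (g u) == Q u]
   else [forall u, forall v, B (g u) (g v) == B u v]).

Definition Isom : {set {perm V}} := [set g | isom_perm g].

(* the quasisimple group whose image is the socle:
   Sp_n(q), SU_n(q), or Omega_n(q) = derived subgroup of O_n(q). *)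
Definition Qsimple : {set {perm V}} :=
  match k with
  | Symp => Isom
  | Unit => Isom :&: [set g : {perm V} | \det (lin1_mx (fun v : V => g v)) == 1]
  | Orth => [~: <<Isom>>, <<Isom>>]%g
  end.

Definition Gam : {set {perm V}} := [set g | semisim g].

(* the permutation of X induced by g (identity outside X) *)
Definition indperm (g : {perm V}) : {perm {set V}} :=
  restr_perm Xpts (actperm ('P^*)%act g).

Definition img (A : {set {perm V}}) : {set {perm {set V}}} :=
  <<[set indperm g | g in A]>>%g.

Definition PGam : {set {perm {set V}}} := img Gam.
Definition Socle0 : {set {perm {set V}}} := img Qsimple.
End Formed.

From mathcomp Require Import all_boot all_order all_algebra all_fingroup all_solvable all_field.
From mathcomp Require Import zify ring.
Set Implicit Arguments. Unset Strict Implicit. Unset Printing Implicit Defensive.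
Import GRing.Theory.
Local Open Scope ring_scope.

(* Call two points of X adjacent when they share a nonzero isotropic vector
   (a singular one in the orthogonal case).  Semisimilarities preserve this
   relation, so every orbital graph through an adjacent pair only joins
   adjacent points.  For perpendicular hyperbolic planes u = <e1, f1> and
   w = <e2, f2>, u and w are not adjacent (they meet trivially), and no point v
   is adjacent to both: v would be spanned by isotropic vectors z1 in u and z2
   in w with B z1 z2 = 0, hence totally isotropic.  So u and w are at distance
   at least 3 in the orbital graph of {u, <e1, f1 + e2>}.
   Such planes exist once there are isotropic vectors orthogonal to any two
   given vectors: this is immediate for alternating forms, follows from the
   surjectivity of the norm onto the fixed field of the involution for
   hermitian forms, and from counting squares for quadratic forms with n >= 5;
   for n = 4 the hypothesis (n, eps) <> (4, -) provides a totally singular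
   2-space instead. *)

Lemma addr_idem0 (M : zmodType) (x : M) : x + x = x -> x = 0.
Proof. by move=> h; apply: (addrI x); rewrite h addr0. Qed.

Section FiniteField.
Variable F : finFieldType.

Lemma card_units_fibres (f : F -> F) : {morph f : x y / x * y} ->
  {in [set~ 0%R : F], forall x, f x != 0} ->
  #|[set~ 0%R : F]| = (#|[set x in [set~ 0%R : F] | f x == 1%R]| * #|f @: [set~ 0%R : F]|)%N.
Proof.
move=> fM fU; rewrite -sum1_card (partition_big_imset f) /= mulnC -sum_nat_const.
apply: eq_bigr => _ /imsetP[x0 x0U ->]; rewrite sum1dep_card.
have x00 : x0 != 0 by rewrite in_setC1 in x0U.
rewrite -[RHS](card_imset _ (mulfI x00)); apply: eq_card => x; rewrite !inE.
apply/andP/imsetP => [[x0' /eqP fx]|[z]]; last first.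
  by rewrite !inE => /andP[z0 /eqP fz] ->; rewrite mulf_neq0 // fM fz mulr1.
exists (x0^-1 * x); last by rewrite mulrA divff // mul1r.
rewrite !inE mulf_neq0 ?invr_eq0 //=; apply/eqP/(mulfI (fU _ x0U)).
by rewrite -fM mulrA divff // mul1r fx mulr1.
Qed.

Lemma card_squares : (#|F| < 2 * #|[set x ^+ 2 | x : F]|)%N.
Proof.
have sqrM : {morph (fun x : F => x ^+ 2) : x y / x * y} by move=> x y; rewrite exprMn.
have sqr_neq0 : {in [set~ 0%R : F], forall x : F, x ^+ 2 != 0}.
  by move=> x; rewrite in_setC1 => x0; rewrite expf_neq0.
have := card_units_fibres sqrM sqr_neq0; set img := _ @: _.
have roots1 : (#|[set x in [set~ 0%R : F] | x ^+ 2 == 1%R]| <= 2)%N.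
  apply: leq_trans (_ : #|[set 1%R; -1%R : F]| <= 2)%N; last by rewrite cards2 ltnS leq_b1.
  by apply: subset_leq_card; apply/subsetP => x; rewrite !inE sqrf_eq1 => /andP[].
have squaresE : [set x ^+ 2 | x : F] = 0 |: img.
  apply/setP => y; apply/imsetP/setU1P => [[x _ ->]|[->|/imsetP[x _ ->]]].
  - have [->|x0] := eqVneq x 0; first by left; rewrite expr0n.
    by right; apply: imset_f; rewrite in_setC1.
  - by exists 0; rewrite ?expr0n.
  - by exists x.
have img0 : 0 \notin img.
  by apply/imsetP => -[x]; rewrite in_setC1 => x0 /esym/eqP; rewrite (negbTE (expf_neq0 2 x0)).
have cardF : #|F| = #|[set~ 0%R : F]|.+1.
  by rewrite cardsC1 prednK // (cardD1 0).
rewrite squaresE cardsU1 img0 cardF => ->; move: roots1.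
by set a := #|[set x in _ | _]|; set m := #|img|; rewrite [nat_of_bool _]/=; nia.
Qed.

Lemma binary_sqr_form_onto (a b c : F) : a != 0 -> b != 0 ->
  exists x y, a * x ^+ 2 + b * y ^+ 2 = c.
Proof.
move=> a0 b0; set S := [set x ^+ 2 | x : F].
set Sa := [set a * s | s in S]; set Sb := [set c - b * s | s in S].
have cardSa : #|Sa| = #|S| by apply/card_imset/mulfI.
have cardSb : #|Sb| = #|S|.
  by apply: card_imset => s t /addrI/oppr_inj/(mulfI b0).
have [_ /setIP[/imsetP[_ /imsetP[x _ ->] ->] /imsetP[_ /imsetP[y _ ->] e]]] :
    exists t, t \in Sa :&: Sb.
  apply/set0Pn/negP => /eqP disj; have := max_card (mem (Sa :|: Sb)).
  rewrite -/#|_| cardsU disj cards0 subn0 cardSa cardSb addnn -mul2n.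
  by rewrite leqNgt card_squares.
by exists x, y; rewrite e; ring.
Qed.

Lemma sqr_onto_char2 : (2 : F) = 0 -> forall c : F, exists x, x ^+ 2 = c.
Proof.
move=> two0; have sqr_inj : injective (fun x : F => x ^+ 2).
  move=> x y /eqP; rewrite eqf_sqr => /orP[/eqP //|/eqP ->].
  by apply/eqP; rewrite eq_sym -addr_eq0 -mulr2n -mulr_natl two0 mul0r.
by have [g _ gK] := injF_bij sqr_inj; move=> c; exists (g c); rewrite gK.
Qed.
End FiniteField.

Section HermitianNorm.
Variables (F : finFieldType) (s : F -> F).
Hypothesis sD : {morph s : a b / a + b}.
Hypothesis sM : {morph s : a b / a * b}.
Hypothesis s1 : s 1 = 1.
Hypothesis sK : involutive s.
Hypothesis s_nontriv : exists a, s a <> a.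

Lemma sigma0 : s 0 = 0.
Proof. by apply: addr_idem0; rewrite -sD addr0. Qed.

Lemma sigmaN a : s (- a) = - s a.
Proof. by apply/eqP; rewrite -addr_eq0 -sD addNr sigma0. Qed.

Lemma sigma_eq0 a : (s a == 0) = (a == 0).
Proof. by apply/eqP/eqP => [h|->]; rewrite ?sigma0 // -[a]sK h sigma0. Qed.

Lemma sigmaV a : s a^-1 = (s a)^-1.
Proof.
have [->|a0] := eqVneq a 0; first by rewrite invr0 sigma0 invr0.
apply: (@mulfI _ (s a)); rewrite ?sigma_eq0 // -sM !divff ?sigma_eq0 //.
Qed.

(* The witness is a + l * s a, for any a making it nonzero. *)
Lemma hilbert90 l : l * s l = 1 -> exists2 a, a != 0 & l = a / s a.
Proof.
move=> hl; have key a : a + l * s a = l * s (a + l * s a).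
  by rewrite sD sM sK mulrDr mulrA hl mul1r addrC.
have [a a0] : exists a, a + l * s a != 0.
  have [h|] := eqVneq (1 + l * s 1) 0; last by exists 1.
  move: h; rewrite s1 mulr1 => /eqP; rewrite addrC addr_eq0 => /eqP lN.
  have [t st] := s_nontriv; exists t.
  by rewrite lN mulN1r subr_eq0 eq_sym; apply/eqP.
by exists (a + l * s a); rewrite // {1}key mulfK // sigma_eq0.
Qed.

Lemma hermitian_norm_onto c : c != 0 -> s c = c -> exists x, x * s x = c.
Proof.
move=> c0 sc; set U := [set~ 0%R : F].
have sU x : x \in U -> s x != 0 by rewrite in_setC1 sigma_eq0.
have normM : {morph (fun x => x * s x) : x y / x * y} by move=> x y; rewrite sM mulrACA.
have quotM : {morph (fun x => x / s x) : x y / x * y}.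
  by move=> x y; rewrite sM invfM mulrACA.
have normU : {in U, forall x, x * s x != 0}.
  by move=> x xU; rewrite mulf_neq0 ?sU // -in_setC1.
have quotU : {in U, forall x, x / s x != 0}.
  by move=> x xU; rewrite mulf_neq0 ?invr_eq0 ?sU // -in_setC1.
set Fix := [set x in U | s x == x]; set Norm1 := [set x in U | x * s x == 1].
have quot_ker : [set x in U | x / s x == 1] = Fix.
  apply/setP => x; rewrite !inE; have [//|x0 /=] := eqVneq x 0.
  have sx0 : s x != 0 by rewrite sigma_eq0.
  by rewrite -(inj_eq (mulIf sx0)) divfK // mul1r eq_sym.
have quot_img : [set x / s x | x in U] = Norm1.
  apply/setP => l; rewrite [in RHS]inE; apply/imsetP/andP => [[x xU ->]|[l0 /eqP hl]].
    split; first by rewrite in_setC1 quotU.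
    by rewrite sM sigmaV sK mulrA divfK ?divff ?sU // -in_setC1.
  by have [a a0 ->] := hilbert90 hl; exists a; rewrite // in_setC1.
have Norm1_gt0 : (0 < #|Norm1|)%N.
  by apply/card_gt0P; exists 1; rewrite !inE oner_eq0 s1 mulr1 eqxx.
have := card_units_fibres normM normU; rewrite -/U -/Norm1.
rewrite (card_units_fibres quotM quotU) -/U quot_ker quot_img mulnC => /eqP.
rewrite eqn_pmul2l // => /eqP card_img.
have norm_img : [set x * s x | x in U] = Fix.
  apply/eqP; rewrite eqEcard -card_img leqnn andbT.
  by apply/subsetP => _ /imsetP[x xU ->]; rewrite !inE normU //= sM sK mulrC.
have : c \in Fix by rewrite !inE c0 sc eqxx.
by rewrite -norm_img => /imsetP[x _ ->]; exists x.
Qed.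
End HermitianNorm.

Section LeftLinearForm.
Variables (F : finFieldType) (n : nat) (B : 'rV[F]_n -> 'rV[F]_n -> F).
Local Notation V := 'rV[F]_n.
Hypothesis Blin : bilinear_l B.

Lemma form0l c : B 0 c = 0.
Proof. by apply: addr_idem0; have := Blin 1 0 0 c; rewrite scale1r addr0 mul1r. Qed.

Lemma formDl x y c : B (x + y) c = B x c + B y c.
Proof. by rewrite -{1}(scale1r x) Blin mul1r. Qed.

Lemma formZl a x c : B (a *: x) c = a * B x c.
Proof. by rewrite -(addr0 (a *: x)) Blin form0l addr0. Qed.

Lemma form_suml (I : finType) (f : I -> V) c : B (\sum_i f i) c = \sum_i B (f i) c.
Proof. exact: (big_morph (B^~ c) (fun x y => formDl x y c) (form0l c)). Qed.

Definition gram_mx (L : seq V) : 'M[F]_(n, size L) :=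
  \matrix_(i, j) B (delta_mx 0 i) (nth 0 L j).

Lemma gram_mxE (L : seq V) v j : (v *m gram_mx L) 0 j = B v (nth 0 L j).
Proof.
rewrite mxE [in RHS](row_sum_delta v) form_suml; apply: eq_bigr => i _.
by rewrite mxE formZl.
Qed.

(* The kernel of the Gram matrix has rank at least n - size L. *)
Lemma exists_orth_notin (L : seq V) p (A : 'M[F]_(p, n)) : (size L + \rank A < n)%N ->
  exists2 v : V, {in L, forall l, B v l = 0} & ~~ (v <= A)%MS.
Proof.
move=> hlt; have : ~~ (kermx (gram_mx L) <= A)%MS.
  apply: contraL hlt => /mxrankS; rewrite mxrank_ker -leqNgt.
  by have := rank_leq_col (gram_mx L); lia.
case/row_subPn => i notA; exists (row i (kermx (gram_mx L))) => // l lL.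
have /sub_kermxP/matrixP/(_ 0 (Ordinal (eqbRL (index_mem l L) lL))) :=
  row_sub i (kermx (gram_mx L)).
by rewrite gram_mxE /= nth_index // mxE.
Qed.

Lemma exists_orth_neq0 (L : seq V) : (size L < n)%N ->
  exists2 v : V, {in L, forall l, B v l = 0} & v != 0.
Proof.
move=> hlt; have [|v vL v0] := @exists_orth_notin L 1 0; first by rewrite mxrank0 addn0.
by exists v => //; apply: contraNneq v0 => ->; apply: sub0mx.
Qed.

Lemma exists_orth_notin_line (L : seq V) (a : V) : ((size L).+1 < n)%N ->
  exists2 v : V, {in L, forall l, B v l = 0} & forall c, v != c *: a.
Proof.
move=> hlt; have [|v vL va] := @exists_orth_notin L 1 a; first by have := rank_leq_row a; lia.
by exists v => // c; apply: contraNneq va => ->; apply/sub_rVP; exists c.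
Qed.

Hypothesis Brefl : forall u v, B u v = 0 -> B v u = 0.

Lemma form_neq0_sym u v : B u v != 0 -> B v u != 0.
Proof. by apply: contraNneq => /Brefl ->. Qed.

Hypothesis Bnondeg : nondeg_form B.

Lemma nondeg_partner u : u != 0 -> exists v, B v u != 0.
Proof.
move=> u0; have [/existsP[v /form_neq0_sym]|/existsPn uperp] := boolP [exists v, B u v != 0].
  by exists v.
by case/eqP: u0; apply: Bnondeg => v; apply/eqP; rewrite -[_ == _]negbK uperp.
Qed.
End LeftLinearForm.

Section HermitianForm.
Variables (F : finFieldType) (n : nat) (B : 'rV[F]_n -> 'rV[F]_n -> F) (s : F -> F).
Local Notation V := 'rV[F]_n.
Hypothesis sD : {morph s : a b / a + b}.
Hypothesis sM : {morph s : a b / a * b}.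
Hypothesis s1 : s 1 = 1.
Hypothesis sK : involutive s.
Hypothesis s_nontriv : exists a, s a <> a.
Hypothesis Blin : bilinear_l B.
Hypothesis Bherm : forall u v, B u v = s (B v u).

Lemma hermitian_refl u v : B u v = 0 -> B v u = 0.
Proof. by move=> uv0; rewrite Bherm uv0 sigma0. Qed.

(* With v1 _|_ v2 anisotropic, x v1 + v2 is isotropic iff the norm of x is
   - B v2 v2 / B v1 v1, which is fixed by s. *)
Lemma hermitian_isotropic_orth (L : seq V) : ((size L).+1 < n)%N ->
  exists z, [/\ z != 0, B z z = 0 & {in L, forall l, B z l = 0}].
Proof.
move=> hL; have [v1 v1L v10] := exists_orth_neq0 Blin (ltnW hL).
have [v1v1|v1v1] := eqVneq (B v1 v1) 0; first by exists v1.
have [v2 v2L v20] := exists_orth_neq0 Blin (L := v1 :: L) hL.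
have [v2v2|v2v2] := eqVneq (B v2 v2) 0.
  by exists v2; split=> // l lL; apply: v2L; rewrite inE lL orbT.
have v2_v1 : B v2 v1 = 0 by apply: v2L; rewrite inE eqxx.
have v1_v2 := hermitian_refl v2_v1.
have sB v : s (B v v) = B v v by rewrite -Bherm.
set c := - B v2 v2 / B v1 v1.
have c0 : c != 0 by rewrite mulf_neq0 ?oppr_eq0 ?invr_eq0.
have sc : s c = c by rewrite sM sigmaN // (sigmaV sD sM s1 sK) !sB.
have [x xc] := hermitian_norm_onto sD sM s1 sK s_nontriv c0 sc.
exists (x *: v1 + v2); split.
- apply: contraNneq c0 => z0; rewrite -xc.
  have := congr1 (B^~ v1) z0; rewrite /= form0l // formDl // formZl // v2_v1 addr0.
  by move/eqP; rewrite mulf_eq0 (negbTE v1v1) orbF => /eqP ->; rewrite mul0r.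
- rewrite formDl // formZl // (Bherm v1) (Bherm v2) !(formDl, formZl) //.
  by rewrite v2_v1 v1_v2 mulr0 addr0 add0r sM !sB mulrA xc divfK // addNr.
- by move=> l lL; rewrite formDl // formZl // v1L // v2L ?mulr0 ?addr0 // inE lL orbT.
Qed.
End HermitianForm.

Section QuadraticForm.
Variables (F : finFieldType) (n : nat) (B : 'rV[F]_n -> 'rV[F]_n -> F) (Q : 'rV[F]_n -> F).
Local Notation V := 'rV[F]_n.
Hypothesis QZ : forall a v, Q (a *: v) = a ^+ 2 * Q v.
Hypothesis Qpolar : forall u v, B u v = Q (u + v) - Q u - Q v.
Hypothesis Blin : bilinear_l B.
Hypothesis Bsym : forall u v, B u v = B v u.

Lemma quadD u v : Q (u + v) = Q u + Q v + B u v.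
Proof. by rewrite Qpolar; ring. Qed.

Lemma polar_diag v : B v v = 2 * Q v.
Proof.
by rewrite Qpolar (_ : v + v = 2 *: v) ?QZ; [ring | rewrite scalerDl scale1r].
Qed.

Lemma singular_orth_char2 (L : seq V) : (2 : F) = 0 -> ((size L).+2 < n)%N ->
  exists z, [/\ z != 0, Q z = 0 & {in L, forall l, B z l = 0}].
Proof.
move=> two0 hL; have [v1 v1L v10] := exists_orth_neq0 Blin (ltnW (ltnW hL)).
have [Qv1|Qv1] := eqVneq (Q v1) 0; first by exists v1.
have [v2 v2L v2_line] := exists_orth_notin_line Blin (L := v1 :: L) v1 hL.
have v1_v2 : B v1 v2 = 0 by rewrite Bsym; apply: v2L; rewrite inE eqxx.
have [x xsq] := sqr_onto_char2 two0 (- Q v2 / Q v1).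
exists (x *: v1 + v2); split.
- by apply: contra (v2_line (- x)); rewrite scaleNr addrC addr_eq0.
- by rewrite quadD QZ formZl // v1_v2 mulr0 addr0 xsq divfK // addNr.
- by move=> l lL; rewrite formDl // formZl // v1L // v2L ?mulr0 ?addr0 // inE lL orbT.
Qed.

(* For pairwise orthogonal anisotropic v1, v2, v3, the vector x v1 + y v2 + v3
   is singular iff Q v1 x^2 + Q v2 y^2 = - Q v3, and it is never 0 because its
   product with v3 is 2 Q v3. *)
Lemma singular_orth_odd (L : seq V) : (2 : F) != 0 -> ((size L).+2 < n)%N ->
  exists z, [/\ z != 0, Q z = 0 & {in L, forall l, B z l = 0}].
Proof.
move=> two0 hL; have [v1 v1L v10] := exists_orth_neq0 Blin (ltnW (ltnW hL)).
have [Qv1|Qv1] := eqVneq (Q v1) 0; first by exists v1.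
have [v2 v2L v20] := exists_orth_neq0 Blin (L := v1 :: L) (ltnW hL).
have [Qv2|Qv2] := eqVneq (Q v2) 0.
  by exists v2; split=> // l lL; apply: v2L; rewrite inE lL orbT.
have [v3 v3L v30] := exists_orth_neq0 Blin (L := v2 :: v1 :: L) hL.
have [Qv3|Qv3] := eqVneq (Q v3) 0.
  by exists v3; split=> // l lL; apply: v3L; rewrite !inE lL !orbT.
have v1_v2 : B v1 v2 = 0 by rewrite Bsym; apply: v2L; rewrite inE eqxx.
have v1_v3 : B v1 v3 = 0 by rewrite Bsym; apply: v3L; rewrite !inE eqxx orbT.
have v2_v3 : B v2 v3 = 0 by rewrite Bsym; apply: v3L; rewrite !inE eqxx.
have [x [y xy]] := binary_sqr_form_onto (- Q v3) Qv1 Qv2.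
have Bz_v3 : B (x *: v1 + y *: v2 + v3) v3 = 2 * Q v3.
  by rewrite !formDl // !formZl // v1_v3 v2_v3 polar_diag !mulr0 !add0r.
exists (x *: v1 + y *: v2 + v3); split.
- by apply: contraNneq (mulf_neq0 two0 Qv3) => z0; rewrite -Bz_v3 z0 form0l.
- rewrite !quadD !QZ !formDl // !formZl // v1_v3 v2_v3 Bsym formZl // -Bsym v1_v2.
  by rewrite !mulr0 !addr0 mulrC (mulrC (y ^+ 2)) xy addNr.
- by move=> l lL; rewrite !formDl // !formZl // v1L // v2L ?v3L ?mulr0 ?addr0 // !inE lL !orbT.
Qed.

Lemma singular_orth (L : seq V) : ((size L).+2 < n)%N ->
  exists z, [/\ z != 0, Q z = 0 & {in L, forall l, B z l = 0}].
Proof.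
by have [two0|two0] := eqVneq (2 : F) 0; [apply: singular_orth_char2 | apply: singular_orth_odd].
Qed.
End QuadraticForm.

Section Planes.
Variables (F : finFieldType) (n : nat) (k : form_kind).
Variables (B : 'rV[F]_n -> 'rV[F]_n -> F) (Q : 'rV[F]_n -> F).
Local Notation V := 'rV[F]_n.
Local Notation X := (Xpts k B Q).

Definition isotropic (z : V) : bool :=
  if form_kind_eqb k Orth then Q z == 0 else B z z == 0.

Definition meet_isotropic (a b : {set V}) : bool :=
  [exists z, [&& z \in a, z \in b, z != 0 & isotropic z]].

Lemma meet_isotropicC a b : meet_isotropic a b = meet_isotropic b a.
Proof. by apply: eq_existsb => z; rewrite andbCA. Qed.

Definition span2 (a b : V) : {set V} := [set p.1 *: a + p.2 *: b | p in [set: F * F]].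

Definition free2 (a b : V) := forall x y : F, x *: a + y *: b = 0 -> x = 0 /\ y = 0.

Definition perp (u w : {set V}) := forall s t, s \in u -> t \in w -> B s t = 0.

Lemma mem_span2 (a b : V) x y : x *: a + y *: b \in span2 a b.
Proof. by apply/imsetP; exists (x, y); rewrite ?inE. Qed.

Lemma mem_span2l (a b : V) : a \in span2 a b.
Proof. by have := mem_span2 a b 1 0; rewrite scale1r scale0r addr0. Qed.

Lemma mem_span2r (a b : V) : b \in span2 a b.
Proof. by have := mem_span2 a b 0 1; rewrite scale1r scale0r add0r. Qed.

Lemma span2P (a b t : V) : t \in span2 a b -> exists x y, t = x *: a + y *: b.
Proof. by case/imsetP=> [[x y] _ ->]; exists x, y. Qed.

Lemma subspace_lincomb (W : {set V}) a b x y : is_subspace W -> a \in W -> b \in W ->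
  x *: a + y *: b \in W.
Proof.
case/andP=> W0 /forallP WZD aW bW.
have ybW : y *: b \in W by rewrite -[y *: b]addr0; apply: (forall_inP (forall_inP (WZD y) b bW)).
exact: (forall_inP (forall_inP (WZD x) a aW)).
Qed.

Lemma span2_subspace (a b : V) : is_subspace (span2 a b).
Proof.
apply/andP; split; first by have := mem_span2 a b 0 0; rewrite !scale0r addr0.
apply/forallP=> c; apply/forall_inP=> _ /span2P[x [y ->]]; apply/forall_inP=> _ /span2P[z [w ->]].
rewrite (_ : _ + _ = (c * x + z) *: a + (c * y + w) *: b) ?mem_span2 //.
by rewrite !scalerDl !scalerDr !scalerA addrACA.
Qed.

Lemma card_span2 (a b : V) : free2 a b -> #|span2 a b| = (#|F| ^ 2)%N.
Proof.
move=> ab_free; rewrite card_imset ?cardsT ?card_prod ?mulnn // => -[x y] [z w] /= /eqP.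
rewrite -subr_eq0 => /eqP xyzw.
have [/eqP + /eqP] : x - z = 0 /\ y - w = 0.
  by apply: ab_free; rewrite !scalerBl -xyzw addrACA opprD.
by rewrite !subr_eq0 => /eqP -> /eqP ->.
Qed.

Lemma is_2space_span2 (a b : V) : free2 a b -> is_2space (span2 a b).
Proof. by move=> ab_free; rewrite /is_2space span2_subspace card_span2 ?eqxx. Qed.

Lemma span2_2space (W : {set V}) a b : is_2space W -> a \in W -> b \in W -> free2 a b ->
  W = span2 a b.
Proof.
case/andP=> Wsub /eqP cardW aW bW ab_free; apply/esym/eqP.
rewrite eqEcard cardW card_span2 // leqnn andbT.
by apply/subsetP=> _ /span2P[x [y ->]]; apply: subspace_lincomb.
Qed.

Lemma totally_singular_perp (W : {set V}) :
  (forall u v, B u v = Q (u + v) - Q u - Q v) -> is_subspace W -> totally_singular Q W ->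
  {in W &, forall u v, B u v = 0}.
Proof.
move=> Qpolar Wsub /forall_inP W_sing u v uW vW.
have uvW : u + v \in W by have := subspace_lincomb 1 1 Wsub uW vW; rewrite !scale1r.
by rewrite Qpolar (eqP (W_sing _ uvW)) (eqP (W_sing _ uW)) (eqP (W_sing _ vW)) !subr0.
Qed.

Hypothesis Blin : bilinear_l B.
Hypothesis Brefl : forall u v, B u v = 0 -> B v u = 0.
Hypothesis isotropic_self : forall z, isotropic z -> B z z = 0.

Lemma hyperbolic_free2 e f : e != 0 -> isotropic e -> B f e != 0 -> free2 e f.
Proof.
move=> e0 ie fe x y xy0.
have /eqP : B (x *: e + y *: f) e = 0 by rewrite xy0 form0l.
rewrite formDl // !formZl // (isotropic_self ie) mulr0 add0r mulf_eq0 (negbTE fe) orbF.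
move=> /eqP y0; split=> //; move/eqP: xy0; rewrite y0 scale0r addr0 scaler_eq0.
by rewrite (negbTE e0) orbF => /eqP.
Qed.

Lemma hyperbolic_Xpts e f : e != 0 -> isotropic e -> B f e != 0 -> span2 e f \in X.
Proof.
move=> e0 ie fe; rewrite inE is_2space_span2 /=; last exact: hyperbolic_free2.
apply/andP; split.
  apply/forall_inP=> _ /span2P[x [y ->]]; apply/implyP=> /forall_inP perp_span.
  have /eqP := perp_span e (mem_span2l e f); have /eqP := perp_span f (mem_span2r e f).
  rewrite !formDl // !formZl // (isotropic_self ie) mulr0 add0r.
  move=> xy_f /eqP; rewrite mulf_eq0 (negbTE fe) orbF => /eqP y0.
  move: xy_f; rewrite y0 mul0r addr0 => /eqP; rewrite mulf_eq0 (negbTE (form_neq0_sym Brefl fe)).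
  by rewrite orbF => /eqP ->; rewrite !scale0r addr0.
apply/implyP=> orth; apply/existsP; exists e; rewrite mem_span2l e0 /=.
by move: ie; rewrite /isotropic orth.
Qed.

Lemma perp_nondeg_meet0 u w z : nondeg_sub B u -> perp u w -> z \in u -> z \in w -> z = 0.
Proof.
move=> /forall_inP u_nondeg uw zu zw; apply/eqP; apply: (implyP (u_nondeg z zu)).
by apply/forall_inP=> t tu; apply/eqP/Brefl/uw.
Qed.

Lemma perp_not_meet_isotropic u w : nondeg_sub B u -> perp u w -> ~~ meet_isotropic u w.
Proof.
move=> u_nondeg uw; apply/existsP=> -[z /and4P[zu zw z0 _]].
by rewrite (perp_nondeg_meet0 u_nondeg uw zu zw) eqxx in z0.
Qed.

Lemma perp_no_common_neighbour u w v : is_2space u -> nondeg_sub B u -> perp u w ->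
  v \in X -> meet_isotropic u v -> meet_isotropic v w -> False.
Proof.
move=> u2 u_nondeg uw; rewrite inE => /and3P[v2 /forall_inP v_nondeg _].
case/existsP=> z1 /and4P[z1u z1v z10 iz1]; case/existsP=> z2 /and4P[z2v z2w z20 _].
have z1_z2 : B z1 z2 = 0 by apply: uw.
have z12_free : free2 z1 z2.
  move=> x y xy0; have [y0|y0] := eqVneq y 0.
    by move: xy0; rewrite y0 scale0r addr0 => /eqP; rewrite scaler_eq0 (negbTE z10) orbF => /eqP.
  have z2E : z2 = (- (y^-1 * x)) *: z1 + 0 *: z1.
    rewrite scale0r addr0 -[z2](scalerK y0) -[y *: z2](addKr (x *: z1)) xy0 addr0.
    by rewrite scalerN scalerA scaleNr.
  have z2u : z2 \in u by rewrite z2E subspace_lincomb //; case/andP: u2.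
  by case/eqP: z20; apply: (perp_nondeg_meet0 u_nondeg uw z2u z2w).
have vE := span2_2space v2 z1v z2v z12_free.
suff: z1 == 0 by rewrite (negbTE z10).
apply: (implyP (v_nondeg z1 z1v)).
apply/forall_inP=> t; rewrite vE => /span2P[x [y ->]]; apply/eqP/Brefl.
by rewrite formDl // !formZl // (isotropic_self iz1) (Brefl z1_z2) !mulr0 addr0.
Qed.
End Planes.

Lemma eq_set2 (T : finType) (a b c d : T) :
  [set a; b] = [set c; d] -> (a = c /\ b = d) \/ (a = d /\ b = c).
Proof.
move=> E.
have /[!inE] ha : a \in [set c; d] by rewrite -E set21.
have /[!inE] hb : b \in [set c; d] by rewrite -E set22.
have /[!inE] hc : c \in [set a; b] by rewrite E set21.
have /[!inE] hd : d \in [set a; b] by rewrite E set22.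
have [ac|ac] := eqVneq a c.
  subst c; left; split=> //; case/orP: hd => /eqP dE; subst d => //.
  by move: hb; rewrite orbb => /eqP.
rewrite (negbTE ac) /= in ha; rewrite eq_sym (negbTE ac) /= in hc.
by right; split; apply/eqP; rewrite // eq_sym.
Qed.

Section OrbitalGraphs.
Variables (F : finFieldType) (n : nat) (k : form_kind).
Variables (B : 'rV[F]_n -> 'rV[F]_n -> F) (Q : 'rV[F]_n -> F).
Local Notation V := 'rV[F]_n.
Local Notation X := (Xpts k B Q).
Local Notation meet_isotropic := (meet_isotropic k B Q).

Lemma semisim_meet_isotropic (g : {perm V}) a b :
  semisim k B Q g -> meet_isotropic a b -> meet_isotropic (g @: a) (g @: b).
Proof.
case/existsP=> tau /and4P[tau_aut /forallP gD _ /existsP[lam /andP[_ g_form]]].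
case/existsP=> z /and4P[za zb z0 iz]; apply/existsP; exists (g z); rewrite !imset_f //=.
have tau0 : tau 0 = 0.
  case/andP: tau_aut => /forallP/(_ 0)/forallP/(_ 0)/andP[/eqP tauD _] _.
  by apply: addr_idem0; rewrite -tauD addr0.
have g0 : g 0 = 0 by apply: addr_idem0; rewrite -(eqP (forallP (gD 0) 0)) addr0.
rewrite -g0 (inj_eq perm_inj) z0 /=; move: iz g_form; rewrite /isotropic.
case: form_kind_eqb => [/eqP Qz /forallP/(_ z)|/eqP Bz /forallP/(_ z)/forallP/(_ z)].
  by rewrite Qz tau0 mulr0.
by rewrite Bz tau0 mulr0.
Qed.

Definition meet_isotropic_pres : {set {perm {set V}}} :=
  [set h : {perm {set V}} | [forall a in X, (h a \in X) &&
     [forall b in X, meet_isotropic a b ==> meet_isotropic (h a) (h b)]]].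

Lemma meet_isotropic_pres_group : group_set meet_isotropic_pres.
Proof.
apply/group_setP; split.
  rewrite inE; apply/forall_inP=> a aX; rewrite perm1 aX /=.
  by apply/forall_inP=> b _; rewrite !perm1 implybb.
move=> h1 h2; rewrite !inE => /forall_inP h1P /forall_inP h2P.
apply/forall_inP=> a aX; rewrite !permM.
have /andP[h1aX /forall_inP h1aP] := h1P a aX.
have /andP[-> /forall_inP h2aP] := h2P _ h1aX.
apply/forall_inP=> b bX; apply/implyP=> ab; rewrite permM.
have /andP[h1bX _] := h1P b bX.
exact: implyP (h2aP _ h1bX) (implyP (h1aP _ bX) ab).
Qed.

Canonical meet_isotropic_pres_groupType := Group meet_isotropic_pres_group.

Lemma PGam_sub_meet_isotropic_pres : PGam k B Q \subset meet_isotropic_pres.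
Proof.
rewrite gen_subG; apply/subsetP=> h /imsetP[g]; rewrite inE => g_semisim ->.
rewrite inE /indperm; set p := actperm _ g.
have [pN|pN] := boolP (p \in 'N(X | 'P))%g; last first.
  rewrite triv_restr_perm //; apply/forall_inP=> a aX; rewrite perm1 aX /=.
  by apply/forall_inP=> b _; rewrite !perm1 implybb.
have pE a : a \in X -> restr_perm X p a = g @: a.
  by move=> aX; rewrite restr_permE // actpermE.
apply/forall_inP=> a aX; rewrite pE //.
have -> : g @: a \in X by rewrite -pE // restr_permE // -apermE (astabs_act a pN).
by apply/forall_inP=> b bX; rewrite pE //; apply/implyP/semisim_meet_isotropic.
Qed.

Lemma orbital_edge_meet_isotropic (G : {set {perm {set V}}}) x y a b :
  G \subset meet_isotropic_pres -> x \in X -> y \in X -> meet_isotropic x y ->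
  orbital_edge G X x y a b -> meet_isotropic a b.
Proof.
move=> sGP xX yX xy /and3P[_ _ /exists_inP[h hG /eqP ab_xy]].
have /[!inE] /forall_inP hP := subsetP sGP h hG.
have /andP[_ /forall_inP /(_ y yX) /implyP /(_ xy) hxy] := hP x xX.
by case: (eq_set2 ab_xy) => -[-> ->] //; rewrite meet_isotropicC.
Qed.

Lemma orbital_diam_ge3 (G : {set {perm {set V}}}) x y u w :
  G \subset meet_isotropic_pres -> x \in X -> y \in X -> x != y -> meet_isotropic x y ->
  u \in X -> w \in X -> u != w -> ~~ meet_isotropic u w ->
  (forall v, v \in X -> meet_isotropic u v -> meet_isotropic v w -> False) ->
  orbital_diam_ge G X 3.
Proof.
move=> sGP xX yX xy xy_mi uX wX uw uw_mi no_mid.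
exists x, y; split=> //; exists u, w; split=> // -[|v1 [|v2 [|v3 p]]] //=.
- by move=> _ wu; rewrite wu eqxx in uw.
- by rewrite andbT => /(orbital_edge_meet_isotropic sGP xX yX xy_mi) uv wv; rewrite -wv uv in uw_mi.
case/and3P=> uv1 v1v2 _ wv2; have /and3P[_ v1X _] := uv1.
case: (no_mid v1 v1X); first exact: orbital_edge_meet_isotropic uv1.
by rewrite -wv2; apply: orbital_edge_meet_isotropic v1v2.
Qed.
End OrbitalGraphs.

Section HyperbolicFrames.
Variables (F : finFieldType) (n : nat) (k : form_kind).
Variables (B : 'rV[F]_n -> 'rV[F]_n -> F) (Q : 'rV[F]_n -> F).
Local Notation V := 'rV[F]_n.
Local Notation X := (Xpts k B Q).
Local Notation isotropic := (isotropic k B Q).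
Hypothesis Blin : bilinear_l B.
Hypothesis Brefl : forall u v, B u v = 0 -> B v u = 0.
Hypothesis Bnondeg : nondeg_form B.
Hypothesis isotropic_self : forall z, isotropic z -> B z z = 0.

(* Project a partner of e2 onto the orthogonal complement of the plane <e1, f1>. *)
Lemma exists_perp_partner e1 f1 e2 : isotropic e1 -> B f1 e1 != 0 -> e2 != 0 ->
  B e2 e1 = 0 -> B e2 f1 = 0 ->
  exists f2, [/\ B f2 e1 = 0, B f2 f1 = 0 & B f2 e2 != 0].
Proof.
move=> ie1 f1e1 e20 e2e1 e2f1; have [v ve2] := nondeg_partner Brefl Bnondeg e20.
have e1f1 := form_neq0_sym Brefl f1e1.
set be := B v e1 / B f1 e1; set al := (B v f1 - be * B f1 f1) / B e1 f1.
exists (v + (- al) *: e1 + (- be) *: f1); rewrite !formDl // !formZl // (isotropic_self ie1).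
split.
- by rewrite /be mulr0 addr0 mulNr divfK // subrr.
- by rewrite /al mulNr divfK //; ring.
- by rewrite (Brefl e2e1) (Brefl e2f1) !mulr0 !addr0.
Qed.

Lemma orbital_diam_ge3_of_isotropic (G : {set {perm {set V}}}) e1 f1 e2 :
  G \subset meet_isotropic_pres k B Q ->
  e1 != 0 -> isotropic e1 -> B f1 e1 != 0 -> e2 != 0 -> isotropic e2 ->
  B e2 e1 = 0 -> B e2 f1 = 0 -> orbital_diam_ge G X 3.
Proof.
move=> sGP e10 ie1 f1e1 e20 ie2 e2e1 e2f1.
have [f2 [f2e1 f2f1 f2e2]] := exists_perp_partner ie1 f1e1 e20 e2e1 e2f1.
set u := span2 e1 f1; set w := span2 e2 f2; set y := span2 e1 (f1 + e2).
have uX : u \in X by apply: hyperbolic_Xpts.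
have wX : w \in X by apply: hyperbolic_Xpts.
have f1e2e1 : B (f1 + e2) e1 != 0 by rewrite formDl // e2e1 addr0.
have yX : y \in X by apply: hyperbolic_Xpts.
have /[!inE] /and3P[u2 u_nondeg _] := uX.
have uw : perp B u w.
  move=> _ _ /span2P[x [x' ->]] /span2P[z [z' ->]].
  have perp_w s : B e2 s = 0 -> B f2 s = 0 -> B s (z *: e2 + z' *: f2) = 0.
    by move=> e2s f2s; apply: Brefl; rewrite formDl // !formZl // e2s f2s !mulr0 addr0.
  by rewrite formDl // !formZl // !perp_w // !mulr0 addr0.
have e1y : e1 \in y by apply: mem_span2l.
apply: (orbital_diam_ge3 sGP uX yX _ _ uX wX) => //.
- apply: contraNneq e20 => uy; apply/eqP.
  apply: (perp_nondeg_meet0 Brefl u_nondeg uw _ (mem_span2l _ _)).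
  have := subspace_lincomb 1 (-1) (span2_subspace e1 (f1 + e2)) (mem_span2r e1 (f1 + e2)).
  by rewrite -/y -uy => /(_ _ (mem_span2r e1 f1)); rewrite scale1r scaleN1r addrC addKr.
- by apply/existsP; exists e1; rewrite mem_span2l e1y e10.
- apply: contraNneq e10 => uw_eq.
  apply/eqP; apply: (perp_nondeg_meet0 Brefl u_nondeg uw (mem_span2l _ _)).
  by rewrite -uw_eq mem_span2l.
- exact: perp_not_meet_isotropic.
- by move=> v vX; apply: (perp_no_common_neighbour Blin Brefl isotropic_self u2 u_nondeg uw vX).
Qed.

Lemma orbital_diam_ge3_of_isotropic_orth (G : {set {perm {set V}}}) :
  G \subset meet_isotropic_pres k B Q ->
  (forall L : seq V, (size L <= 2)%N ->
     exists z, [/\ z != 0, isotropic z & {in L, forall l, B z l = 0}]) ->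
  orbital_diam_ge G X 3.
Proof.
move=> sGP isotropic_orth; have [e1 [e10 ie1 _]] := isotropic_orth [::] isT.
have [f1 f1e1] := nondeg_partner Brefl Bnondeg e10.
have [e2 [e20 ie2 e2L]] := isotropic_orth [:: e1; f1] isT.
apply: (orbital_diam_ge3_of_isotropic sGP e10 ie1 f1e1 e20 ie2); apply: e2L.
  by rewrite mem_head.
by rewrite !inE eqxx orbT.
Qed.

Lemma two_space_basis (W : {set V}) : is_2space W ->
  exists a b, [/\ a \in W, b \in W, a != 0 & forall c, b != c *: a].
Proof.
case/andP=> _ /eqP cardW; have F1 := finNzRing_gt1 F.
have W_notin (S : {set V}) : (#|S| <= #|F|)%N -> exists2 b, b \in W & b \notin S.
  move=> cardS; apply/subsetPn/negP => /subset_leq_card /leq_trans /(_ cardS).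
  by rewrite cardW -mulnn => /(leq_trans (ltn_Pmulr F1 (ltnW F1))); rewrite ltnn.
have [a aW] := W_notin [set 0] (ltnW (leq_ltn_trans (eq_leq (cards1 0)) F1)).
rewrite in_set1 => a0; have [b bW b_line] := W_notin _ (leq_imset_card (fun c => c *: a) F).
by exists a, b; split=> // c; apply: contraNneq b_line => ->; apply: imset_f.
Qed.

Lemma orbital_diam_ge3_of_totally_isotropic (G : {set {perm {set V}}}) (W : {set V}) :
  G \subset meet_isotropic_pres k B Q -> is_2space W -> {in W, forall v, isotropic v} ->
  {in W &, forall u v, B u v = 0} -> orbital_diam_ge G X 3.
Proof.
move=> sGP W2 W_iso W_perp; have [e1 [e [e1W eW e10 e_line]]] := two_space_basis W2.
have [f1 f1e1] := nondeg_partner Brefl Bnondeg e10.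
have e1f1 := form_neq0_sym Brefl f1e1.
set e2 := B e f1 *: e1 + (- B e1 f1) *: e.
have e2W : e2 \in W by apply: subspace_lincomb => //; case/andP: W2.
apply: (orbital_diam_ge3_of_isotropic sGP e10 (W_iso _ e1W) f1e1 _ (W_iso _ e2W)).
- apply: contra (e_line (B e f1 / B e1 f1)) => e20.
  apply/eqP/(scalerI e1f1); rewrite scalerA mulrC divfK //.
  by move: e20; rewrite /e2 scaleNr addr_eq0 opprK => /eqP ->.
- exact: W_perp.
- by rewrite /e2 formDl // !formZl //; ring.
Qed.
End HyperbolicFrames.

Local Close Scope ring_scope.

Theorem mainTheorem13 (F : finFieldType) (n : nat) (k : form_kind)
  (sigma : F -> F) (B : 'rV[F]_n -> 'rV[F]_n -> F) (Q : 'rV[F]_n -> F)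
  (G : {group {perm {set 'rV[F]_n}}}) :
  (4 <= n)%N ->
  formed_space k sigma B Q ->
  (k = Orth -> n = 4 ->
     exists W : {set 'rV[F]_n}, is_2space W /\ totally_singular Q W) ->
  G \subset PGam k B Q ->
  (Socle0 k B Q <| G)%g ->
  simple (Socle0 k B Q) ->
  ~~ abelian (Socle0 k B Q) ->
  ('C_G(Socle0 k B Q))%g = 1%g ->
  [primitive G, on Xpts k B Q | 'P] ->
  orbital_diam_ge G (Xpts k B Q) 3.
Proof.
move=> n4 formed W_n4 sGPGam _ _ _ _ _.
have {sGPGam} := subset_trans sGPGam (PGam_sub_meet_isotropic_pres k B Q).
case: k formed W_n4 => [[Blin [Banti [Balt Bnd]]]
  | [sD [sM [s1 [sK [s_nontriv [Blin [Bherm Bnd]]]]]]]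
  | [QZ [Qpolar [Blin [Bsym Bnd]]]]] W_n4 sGP.
- have Brefl u v : B u v = 0%R -> B v u = 0%R by move=> uv; rewrite Banti uv oppr0.
  apply: (orbital_diam_ge3_of_isotropic_orth Blin Brefl Bnd (fun z _ => Balt z) sGP).
  move=> L hL; have [|z zL z0] := exists_orth_neq0 Blin (L := L); first by lia.
  by exists z; rewrite /isotropic /= Balt.
- apply: (orbital_diam_ge3_of_isotropic_orth Blin (hermitian_refl sD Bherm) Bnd _ sGP).
    by move=> z /eqP.
  move=> L hL; have [|z [z0 zz zL]] :=
    hermitian_isotropic_orth sD sM s1 sK s_nontriv Blin Bherm (L := L); first by lia.
  by exists z; rewrite /isotropic /= zz.
- have Brefl u v : B u v = 0%R -> B v u = 0%R by rewrite Bsym.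
  have isotropic_self z : isotropic Orth B Q z -> B z z = 0%R.
    by move=> /eqP Qz; rewrite (polar_diag QZ Qpolar) Qz mulr0.
  have [n_eq4|n_gt4] := eqVneq n 4.
    have [W [W2 W_sing]] := W_n4 erefl n_eq4.
    apply: (orbital_diam_ge3_of_totally_isotropic Blin Brefl Bnd isotropic_self sGP W2).
      exact/forall_inP.
    exact: totally_singular_perp Qpolar (andP W2).1 W_sing.
  apply: (orbital_diam_ge3_of_isotropic_orth Blin Brefl Bnd isotropic_self sGP).
  move=> L hL; have [|z [z0 Qz zL]] := singular_orth QZ Qpolar Blin Bsym (L := L); first by lia.
  by exists z; rewrite /isotropic /= Qz.
Qed.
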